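(* Let $\mathcal U$ and $\mathcal V$ be universal Martin-Löf tests. Then $\mathsf{RD}_{\mathcal V}\not\le_{\mathrm{sW}}\mathsf{LAY}_{\mathcal U}$.
   Context: Cantor space $2^\omega$, Lebesgue measure $\lambda$. A Martin-Löf (ML) test is a sequence $(\mathcal V_i)_{i\in\omega}$ of open subsets of $2^\omega$ such that $\{\langle i,\sigma\rangle:[\sigma]\subseteq\mathcal V_i\}$ is c.e. and $\lambda(\mathcal V_i)\le 2^{-i}$; it is universal if $\bigcap_i\mathcal V'_i\subseteq\bigcap_i\mathcal V_i$ for every ML-test $\mathcal V'$. $\mathrm{MLR}$ is the set of Martin-Löf random sequences ($=2^\omega\setminus\bigcap_i\mathcal U_i$ for any universal $\mathcal U$); for $X\in\mathrm{MLR}$, $\mathrm{rd}_{\mathcal U}(X)=\min\{i:X\notin\mathcal U_i\}$. A representation of a set $X$ is a surjective partial map $\delta_X:\subseteq\omega^\omega\to X$. A realizer of a multi-valued partial function $f:\subseteq X\rightrightarrows Y$ is a partial $\Gamma:\subseteq\omega^\omega\to\omega^\omega$ with $\delta_Y(\Gamma(p))\in f(\delta_X(p))$ for all $p\in\mathrm{dom}(f\circ\delta_X)$. $f\le_{\mathrm{sW}} g$ if there are Turing functionals $\Phi,\Psi$ such that $\Psi\circ\Gamma\circ\Phi$ realizes $f$ for every realizer $\Gamma$ of $g$. $\mathrm{MLR}$ is represented by the identity on $\mathrm{MLR}\subseteq\omega^\omega$, $\omega$ by $\chi_{\{n\}}\mapsto n$. $\mathsf{LAY}_{\mathcal U}\colon\mathrm{MLR}\rightrightarrows\omega$,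 $\mathsf{LAY}_{\mathcal U}(X)=\{i:X\notin\mathcal U_i\}$; $\mathsf{RD}_{\mathcal V}\colon\mathrm{MLR}\to\omega$, $\mathsf{RD}_{\mathcal V}(X)=\mathrm{rd}_{\mathcal V}(X)$. *)

From mathcomp Require Import all_boot.
Set Implicit Arguments. Unset Strict Implicit. Unset Printing Implicit Defensive.

Inductive prog : Type :=
  | PZero : prog
  | PSucc : prog
  | PProj : nat -> prog
  | POrc  : prog
  | PComp : prog -> list prog -> prog
  | PRec  : prog -> prog -> prog
  | PMu   : prog -> prog.

Inductive eval (o : nat -> nat) : prog -> seq nat -> nat -> Prop :=
  | ev_zero xs : eval o PZero xs 0
  | ev_succ xs : eval o PSucc xs (nth 0 xs 0).+1
  | ev_proj i xs : eval o (PProj i) xs (nth 0 xs i)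
  | ev_orc xs : eval o POrc xs (o (nth 0 xs 0))
  | ev_comp f gs xs vs v :
      evals o gs xs vs -> eval o f vs v -> eval o (PComp f gs) xs v
  | ev_rec0 b s xs v : eval o b xs v -> eval o (PRec b s) (0 :: xs) v
  | ev_recS b s n xs w v :
      eval o (PRec b s) (n :: xs) w -> eval o s [:: n, w & xs] v ->
      eval o (PRec b s) (n.+1 :: xs) v
  | ev_mu f xs n :
      eval o f (n :: xs) 0 ->
      (forall m, m < n -> exists k, eval o f (m :: xs) k.+1) ->
      eval o (PMu f) xs n
with evals (o : nat -> nat) : list prog -> seq nat -> seq nat -> Prop :=
  | evs_nil xs : evals o nil xs [::]
  | evs_cons g gs xs v vs :
      eval o g xs v -> evals o gs xs vs -> evals o (g :: gs) xs (v :: vs).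

(* Binary strings coded as natural numbers (leading-1 binary code). *)
Fixpoint enc (s : seq bool) : nat :=
  match s with [::] => 1 | b :: s' => (enc s').*2 + b end.

Definition ce2 (S : nat -> seq bool -> Prop) : Prop :=
  exists e : prog, forall i s, S i s <-> exists v, eval (fun _ => 0) e [:: i; enc s] v.

(* Partial maps on Baire space are functional relations. *)
Definition pmap := (nat -> nat) -> (nat -> nat) -> Prop.
Definition functional (G : pmap) : Prop :=
  forall p q1 q2, G p q1 -> G p q2 -> q1 = q2.

Definition TF (e : prog) : pmap := fun p q => forall n, eval p e [:: n] (q n).

Definition cantor := nat -> bool.
Definition prefix (X : cantor) (n : nat) : seq bool := mkseq X n.
Definition cyl (s : seq bool) (X : cantor) : Prop := prefix X (size s) = s.
Definition sub_cyl (s : seq bool) (A : cantor -> Prop) : Prop :=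
  forall Y, cyl s Y -> A Y.
Definition open_set (A : cantor -> Prop) : Prop :=
  forall X, A X -> exists n, sub_cyl (prefix X n) A.

(* Lebesgue measure of a finite union of cylinders [sigma], sigma in l,
   is  #{tau in 2^L | tau extends some sigma in l} / 2^L  with L = max |sigma|. *)
Definition maxlen (l : seq (seq bool)) : nat := foldr maxn 0 (map size l).
Definition ext_count (l : seq (seq bool)) : nat :=
  #|[set t : (maxlen l).-tuple bool | has (fun s => take (size s) t == s) l]|.
(* lambda(A) <= 2^-i for open A: every finite union of cylinders contained in A
   has measure <= 2^-i (lambda of an open set = sup of such measures). *)
Definition measure_le_pow2 (A : cantor -> Prop) (i : nat) : Prop :=
  forall l : seq (seq bool), (forall s, s \in l -> sub_cyl s A) ->
    ext_count l * 2 ^ i <= 2 ^ maxlen l.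

Definition ML_test (V : nat -> cantor -> Prop) : Prop :=
  [/\ forall i, open_set (V i),
      ce2 (fun i s => sub_cyl s (V i)) &
      forall i, measure_le_pow2 (V i) i].

Definition universal_test (U : nat -> cantor -> Prop) : Prop :=
  ML_test U /\
  forall V', ML_test V' -> forall X, (forall i, V' i X) -> forall i, U i X.

Definition MLR (X : cantor) : Prop :=
  forall W, ML_test W -> exists i, ~ W i X.

(* Representation of MLR: identity on MLR \subseteq omega^omega. *)
Definition delta_MLR (p : nat -> nat) (X : cantor) : Prop :=
  (forall k, p k = nat_of_bool (X k)) /\ MLR X.
Definition delta_nat (q : nat -> nat) (n : nat) : Prop :=
  forall k, q k = nat_of_bool (k == n).

Definition LAY (U : nat -> cantor -> Prop) (X : cantor) (i : nat) : Prop := ~ U i X.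
Definition RD (V : nat -> cantor -> Prop) (X : cantor) (n : nat) : Prop :=
  ~ V n X /\ forall m, m < n -> V m X.

Definition realizes {A B : Type} (dA : (nat -> nat) -> A -> Prop)
  (dB : (nat -> nat) -> B -> Prop) (f : A -> B -> Prop) (G : pmap) : Prop :=
  forall p a, dA p a -> (exists b, f a b) ->
    exists q, G p q /\ exists b, dB q b /\ f a b.

Definition pcomp3 (Psi G Phi : pmap) : pmap :=
  fun p r => exists q1 q2, Phi p q1 /\ G q1 q2 /\ Psi q2 r.

Definition sW_le {A B C D : Type}
  (dA : (nat -> nat) -> A -> Prop) (dB : (nat -> nat) -> B -> Prop) (f : A -> B -> Prop)
  (dC : (nat -> nat) -> C -> Prop) (dD : (nat -> nat) -> D -> Prop) (g : C -> D -> Prop) :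
  Prop :=
  exists ePhi ePsi : prog, forall G : pmap, functional G -> realizes dC dD g G ->
    realizes dA dB f (pcomp3 (TF ePsi) G (TF ePhi)).

From Pilot Require Import Defs.
From mathcomp Require Import all_boot.
From Stdlib Require Import Classical ClassicalEpsilon FunctionalExtensionality.
Set Implicit Arguments. Unset Strict Implicit. Unset Printing Implicit Defensive.

(* Let [ePhi], [ePsi] witness the reduction.  A realizer of [LAY U] may answer
   any [i] with [Y ∉ U_i], so for random [X] and [Y = Φ(X)], [Ψ] must send the
   name of every such [i] to the name of [rd_V(X)].  Take random [X1], [X2]
   with levels [k1 <> k2] (random points close to the all-zero sequence, which
   lies in every [V_i], are in [V_k1]).  [Y2 = Φ(X2)] avoids [U_i] for
   arbitrarily large [i], and each such [i] makes [Ψ] reject [k1]; so searching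
   for the next [c >= j] at which [Ψ^c] rejects [k1] is a total computable [h]
   with [h j >= j], and [(U_(h j))_j] is an ML test.  The random [Y1 = Φ(X1)]
   escapes some [U_(h j)], where [Ψ] must accept [k1]: a contradiction.  The
   search is effective because step-bounded evaluation is itself computed by a
   program. *)

Fixpoint all_progs (P : prog -> Prop) (gs : list prog) : Prop :=
  match gs with nil => True | g :: gs' => P g /\ all_progs P gs' end.

Definition prog_nested_ind (P : prog -> Prop) (P0 : P PZero) (PS : P PSucc)
  (PP : forall i, P (PProj i)) (PO : P POrc)
  (PC : forall f gs, P f -> all_progs P gs -> P (PComp f gs))
  (PR : forall b s, P b -> P s -> P (PRec b s)) (PM : forall f, P f -> P (PMu f)) :
  forall e, P e :=
  fix F e := match e with
  | PZero => P0 | PSucc => PS | PProj i => PP i | POrc => PO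
  | PComp f gs => PC f gs (F f)
      ((fix G gs := match gs return all_progs P gs with nil => I
         | g :: gs' => conj (F g) (G gs') end) gs)
  | PRec b s => PR b s (F b) (F s)
  | PMu f => PM f (F f) end.

Section Determinism.
Variable o : nat -> nat.

Definition eval_det_at (e : prog) : Prop :=
  forall xs v1 v2, eval o e xs v1 -> eval o e xs v2 -> v1 = v2.

Lemma evals_det gs xs vs1 vs2 : all_progs eval_det_at gs ->
  evals o gs xs vs1 -> evals o gs xs vs2 -> vs1 = vs2.
Proof.
elim: gs vs1 vs2 => [|g gs IH] vs1 vs2 /=.
  by move=> _ H1 H2; inversion H1; inversion H2.
case=> Hg Hgs H1 H2; inversion H1 as [|? ? ? a1 l1 Ha1 Hl1];
  inversion H2 as [|? ? ? a2 l2 Ha2 Hl2]; subst.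
by rewrite (Hg _ _ _ Ha1 Ha2) (IH _ _ Hgs Hl1 Hl2).
Qed.

Lemma eval_det e : eval_det_at e.
Proof.
elim/prog_nested_ind: e.
- by move=> xs v1 v2 H1 H2; inversion H1; inversion H2; subst.
- by move=> xs v1 v2 H1 H2; inversion H1; inversion H2; subst.
- by move=> i xs v1 v2 H1 H2; inversion H1; inversion H2; subst.
- by move=> xs v1 v2 H1 H2; inversion H1; inversion H2; subst.
- move=> f gs IHf IHgs xs v1 v2 H1 H2; inversion H1 as [| | | |? ? ? vs1 ? Hgs1 Hf1| | |];
    inversion H2 as [| | | |? ? ? vs2 ? Hgs2 Hf2| | |]; subst.
  rewrite (evals_det IHgs Hgs1 Hgs2) in Hf1; exact: IHf Hf1 Hf2.
- move=> b s IHb IHs [|n xs] v1 v2 H1; first by inversion H1.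
  elim: n v1 v2 H1 => [|n IHn] v1 v2 H1 H2.
    inversion H1 as [| | | | |? ? ? ? Hb1| |]; inversion H2 as [| | | | |? ? ? ? Hb2| |].
    exact: IHb Hb1 Hb2.
  inversion H1 as [| | | | | |? ? ? ? ? ? Hr1 Hs1|];
    inversion H2 as [| | | | | |? ? ? ? ? ? Hr2 Hs2|]; subst.
  rewrite (IHn _ _ Hr1 Hr2) in Hs1; exact: IHs Hs1 Hs2.
- move=> f IHf xs v1 v2 H1 H2; inversion H1 as [| | | | | | |? ? ? Hz1 Hlt1];
    inversion H2 as [| | | | | | |? ? ? Hz2 Hlt2]; subst.
  case: (ltngtP v1 v2) => // Hlt.
    by case: (Hlt2 _ Hlt) => k /(IHf _ _ _ Hz1).
  by case: (Hlt1 _ Hlt) => k /(IHf _ _ _ Hz2).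
Qed.

End Determinism.

Definition papp1 (f g : prog) : prog := PComp f [:: g].
Definition papp2 (f g h : prog) : prog := PComp f [:: g; h].

Fixpoint pconst (n : nat) : prog :=
  if n is n'.+1 then papp1 PSucc (pconst n') else PZero.

Definition ppred : prog := PRec PZero (PProj 0).
Definition padd : prog := PRec (PProj 0) (papp1 PSucc (PProj 1)).
Definition pmul : prog := PRec PZero (papp2 padd (PProj 1) (PProj 2)).
Definition psign : prog := PRec PZero (pconst 1).
Definition piszero : prog := PRec (pconst 1) PZero.
Definition psub : prog :=
  papp2 (PRec (PProj 0) (papp1 ppred (PProj 1))) (PProj 1) (PProj 0).
Definition peq : prog :=
  papp1 piszero (papp2 padd psub (papp2 psub (PProj 1) (PProj 0))).

Section Arithmetic.
Variable o : nat -> nat.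

Lemma eval_papp1 f g xs a v :
  eval o g xs a -> eval o f [:: a] v -> eval o (papp1 f g) xs v.
Proof. by move=> Hg; apply: ev_comp; apply: evs_cons Hg (evs_nil _ _). Qed.

Lemma eval_papp2 f g h xs a b v : eval o g xs a -> eval o h xs b ->
  eval o f [:: a; b] v -> eval o (papp2 f g h) xs v.
Proof.
move=> Hg Hh; apply: ev_comp; apply: evs_cons Hg _; exact: evs_cons Hh (evs_nil _ _).
Qed.

Lemma eval_papp1_inv f g xs v : eval o (papp1 f g) xs v ->
  exists a, eval o g xs a /\ eval o f [:: a] v.
Proof.
move=> H; inversion H as [| | | |? ? ? vs ? Hgs Hf| | |]; subst.
inversion Hgs as [|? ? ? a ? Ha Hnil]; inversion Hnil; subst; by exists a.
Qed.

Lemma eval_papp2_inv f g h xs v : eval o (papp2 f g h) xs v ->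
  exists a b, [/\ eval o g xs a, eval o h xs b & eval o f [:: a; b] v].
Proof.
move=> H; inversion H as [| | | |? ? ? vs ? Hgs Hf| | |]; subst.
inversion Hgs as [|? ? ? a ? Ha Hgs']; subst.
inversion Hgs' as [|? ? ? b ? Hb Hnil]; inversion Hnil; subst; by exists a, b.
Qed.

Lemma eval_PMu_inv f xs n : eval o (PMu f) xs n -> eval o f (n :: xs) 0.
Proof. by move=> H; inversion H. Qed.

Lemma eval_PRec_seq b s xs (R : nat -> nat) :
  eval o b xs (R 0) -> (forall k, eval o s [:: k, R k & xs] (R k.+1)) ->
  forall n, eval o (PRec b s) (n :: xs) (R n).
Proof.
move=> H0 HS; elim=> [|n IH]; first exact: ev_rec0.
exact: ev_recS IH (HS n).
Qed.

Lemma eval_pconst n xs : eval o (pconst n) xs n.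
Proof. elim: n => [|n IH]; [exact: ev_zero | exact: eval_papp1 IH (ev_succ _ _)]. Qed.

Lemma eval_ppred x : eval o ppred [:: x] x.-1.
Proof.
apply: (eval_PRec_seq (R := predn)); first exact: ev_zero.
by move=> k; exact: ev_proj.
Qed.

Lemma eval_padd x y : eval o padd [:: x; y] (x + y).
Proof.
apply: (eval_PRec_seq (R := addn^~ y)) => [|k]; first exact: ev_proj.
exact: eval_papp1 (ev_proj _ _ _) (ev_succ _ _).
Qed.

Lemma eval_pmul x y : eval o pmul [:: x; y] (x * y).
Proof.
apply: (eval_PRec_seq (R := muln^~ y)) => [|k]; first exact: ev_zero.
rewrite mulSn addnC; exact: eval_papp2 (ev_proj _ _ _) (ev_proj _ _ _) (eval_padd _ _).
Qed.

Lemma eval_psign x : eval o psign [:: x] (0 < x).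
Proof.
apply: (eval_PRec_seq (R := fun n => nat_of_bool (0 < n))); first exact: ev_zero.
by move=> k; exact: eval_pconst.
Qed.

Lemma eval_piszero x : eval o piszero [:: x] (x == 0).
Proof.
apply: (eval_PRec_seq (R := fun n => nat_of_bool (n == 0))); first exact: eval_pconst.
by move=> k; exact: ev_zero.
Qed.

Lemma eval_psub x y : eval o psub [:: x; y] (x - y).
Proof.
apply: eval_papp2 (ev_proj _ _ _) (ev_proj _ _ _) _.
apply: (eval_PRec_seq (R := subn x)) => [|k]; first by rewrite subn0; exact: ev_proj.
rewrite subnS; exact: eval_papp1 (ev_proj _ _ _) (eval_ppred _).
Qed.

Lemma eval_peq x y : eval o peq [:: x; y] (x == y).
Proof.
have -> : (x == y) = (x - y + (y - x) == 0) by rewrite addn_eq0 !subn_eq0 eqn_leq.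
apply: eval_papp1 (eval_piszero _).
apply: eval_papp2 (eval_psub _ _) _ (eval_padd _ _).
exact: eval_papp2 (ev_proj _ _ _) (ev_proj _ _ _) (eval_psub _ _).
Qed.

End Arithmetic.

Definition chi (i : nat) : nat -> nat := fun k => nat_of_bool (k == i).

(* Values of [F] are shifted by one as in [beval].  [bsearch F t] is [n.+2] if
   [n < t] is the least value-[0] candidate ([F n = 1]), [0] if some earlier
   candidate has no value ([F m = 0]), and [1] if the search is still running. *)
Definition bsearch_step (r k : nat) : nat :=
  (0 < r) * ((r == 1) * k.+2 + ((r == 1 : nat) == 0)).

Fixpoint bsearch (F : nat -> nat) (k : nat) : nat :=
  if k is k'.+1 then
    let s := bsearch F k' in (s == 1) * bsearch_step (F k') k' + ((s == 1 : nat) == 0) * s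
  else 1.

Fixpoint brec (B : nat) (S : nat -> nat -> nat) (k : nat) : nat :=
  if k is k'.+1 then (0 < brec B S k') * S k' (brec B S k').-1 else B.

(* [beval t i e xs] evaluates [e] on [xs] with oracle [chi i] where every [PMu]
   inspects only the candidates below [t]; it returns [v.+1] for the output [v]
   and [0] for no output.  The clauses are arithmetic so that [beval_prog] can
   compute them. *)
Fixpoint beval (t i : nat) (e : prog) (xs : seq nat) {struct e} : nat :=
  match e with
  | PZero => 1
  | PSucc => (nth 0 xs 0).+2
  | PProj j => (nth 0 xs j).+1
  | POrc => (nth 0 xs 0 == i).+1
  | PComp f gs => let ws := map (fun g => beval t i g xs) gs in
      all (fun w => 0 < w) ws * beval t i f (map predn ws)
  | PRec b s => if xs is n :: xs' then
      brec (beval t i b xs') (fun k w => beval t i s [:: k, w & xs']) n else 0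
  | PMu f => (bsearch (fun n => beval t i f (n :: xs)) t).-1
  end.

Lemma bsearch_step1 k : bsearch_step 1 k = k.+2.
Proof. by rewrite /bsearch_step mul1n addn0 mul1n. Qed.

Lemma bsearch_step_gt1 r k : 1 < r -> bsearch_step r k = 1.
Proof. by case: r => [|[|r]]. Qed.

Lemma bsearch_stepS F k : bsearch F k.+1 =
  if bsearch F k == 1 then bsearch_step (F k) k else bsearch F k.
Proof. by rewrite /=; case: (bsearch F k == 1); rewrite /= ?mul1n ?mul0n ?addn0. Qed.

Lemma bsearch_spec F k : (bsearch F k = 1 -> forall m, m < k -> 1 < F m) /\
  (forall n, bsearch F k = n.+2 -> F n = 1 /\ forall m, m < n -> 1 < F m).
Proof.
elim: k => [|k [IH1 IH2]]; first by split.
rewrite bsearch_stepS; case: eqP => Hs; last by split=> // /Hs.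
case: (ltngtP (F k) 1) => HF.
- by have -> : F k = 0 by case: (F k) HF.
- rewrite bsearch_step_gt1 //; split=> // _ m.
  by rewrite ltnS leq_eqVlt => /predU1P [->//|/(IH1 Hs)].
- rewrite HF bsearch_step1; split=> // n [<-]; split=> //; exact: IH1 Hs.
Qed.

Lemma bsearch_found F n : F n = 1 -> (forall m, m < n -> 1 < F m) ->
  forall k, n < k -> bsearch F k = n.+2.
Proof.
move=> Hn Hm.
have Hle k : k <= n -> bsearch F k = 1.
  elim: k => [//|k IH] Hk; rewrite bsearch_stepS IH ?eqxx; last exact: ltnW.
  exact/bsearch_step_gt1/Hm.
elim=> [//|k IH]; rewrite ltnS leq_eqVlt => /predU1P [<-|Hnk].
  by rewrite bsearch_stepS Hle // eqxx Hn bsearch_step1.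
by rewrite bsearch_stepS IH.
Qed.

Definition eventually (P : nat -> Prop) : Prop := exists t0, forall t, t0 <= t -> P t.

Lemma eventually_and P Q : eventually P -> eventually Q -> eventually (fun t => P t /\ Q t).
Proof.
move=> [a Ha] [b Hb]; exists (maxn a b) => t; rewrite geq_max => /andP [Hat Hbt].
by split; [exact: Ha | exact: Hb].
Qed.

Lemma eventually_impl (P Q : nat -> Prop) :
  (forall t, P t -> Q t) -> eventually P -> eventually Q.
Proof. by move=> H [a Ha]; exists a => t /Ha /H. Qed.

Lemma eventually_all_lt n (P : nat -> nat -> Prop) :
  (forall m, m < n -> eventually (P^~ m)) ->
  eventually (fun t => forall m, m < n -> P t m).
Proof.
elim: n => [|n IH] H; first by exists 0.
have := eventually_and (IH (fun m Hm => H m (ltnW Hm))) (H n (ltnSn n)).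
apply: eventually_impl => t [H1 H2] m; rewrite ltnS leq_eqVlt.
by case/predU1P => [->|/H1].
Qed.

Section BoundedEvaluation.
Variable i : nat.

Lemma beval_sound t e : forall xs v, beval t i e xs = v.+1 -> eval (chi i) e xs v.
Proof.
elim/prog_nested_ind: e => /=.
- by move=> xs v [<-]; exact: ev_zero.
- by move=> xs v [<-]; exact: ev_succ.
- by move=> j xs v [<-]; exact: ev_proj.
- by move=> xs v [<-]; exact: ev_orc.
- move=> f gs IHf IHgs xs v.
  case Hall: (all _ _); rewrite ?mul1n // => Hf.
  apply: ev_comp (IHf _ _ Hf).
  elim: gs IHgs Hall {Hf} => [|g gs IH] /=; first by move=> _ _; exact: evs_nil.
  case=> Hg Hgs /andP [Hpos Hall]; apply: evs_cons (IH Hgs Hall).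
  by apply: Hg; rewrite prednK.
- move=> b s IHb IHs [|n xs] v //.
  elim: n v => [|n IHn] v /=; first by move=> H; apply: ev_rec0; exact: IHb.
  case E: (brec _ _ n) => [|w] //=; rewrite mul1n => H.
  exact: ev_recS (IHn _ E) (IHs _ _ H).
- move=> f IHf xs v H.
  have Hs : bsearch (fun n => beval t i f (n :: xs)) t = v.+2.
    by case: (bsearch _ t) H => [|[|x]] //= ->.
  have [_ /(_ _ Hs) [Hv Hm]] := bsearch_spec (fun n => beval t i f (n :: xs)) t.
  apply: ev_mu; first exact: IHf.
  move=> m /Hm; case E: (beval t i f (m :: xs)) => [|[|k]] // _.
  by exists k; apply: IHf.
Qed.

Lemma beval_complete e :
  forall xs v, eval (chi i) e xs v -> eventually (fun t => beval t i e xs = v.+1).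
Proof.
elim/prog_nested_ind: e.
- by move=> xs v H; inversion H; exists 0.
- by move=> xs v H; inversion H; exists 0.
- by move=> j xs v H; inversion H; exists 0.
- by move=> xs v H; inversion H; exists 0.
- move=> f gs IHf IHgs xs v H; inversion H as [| | | |? ? ? vs ? Hgs Hf| | |]; subst.
  have Hws : eventually (fun t => map (fun g => beval t i g xs) gs = map succn vs).
    elim: gs vs IHgs {H IHf Hf} Hgs => [|g gs IH] vs /=.
      by move=> _ Hv; inversion Hv; exists 0.
    case=> Hg Hgs' Hv; inversion Hv as [|? ? ? a l Ha Hl]; subst.
    by apply: eventually_impl (eventually_and (Hg _ _ Ha) (IH _ Hgs' Hl)) => t [-> ->].
  apply: eventually_impl (eventually_and Hws (IHf _ _ Hf)) => t [E1 E2] /=.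
  rewrite E1 -map_comp map_id E2.
  suff -> : all (fun w => 0 < w) (map succn vs) by rewrite mul1n.
  by rewrite all_map; apply/allP.
- move=> b s IHb IHs [|n xs] v H; first by inversion H.
  elim: n v H => [|n IHn] v H.
    by inversion H as [| | | | |? ? ? ? Hb| |]; exact: IHb.
  inversion H as [| | | | | |? ? ? ? w ? Hr Hs|]; subst.
  apply: eventually_impl (eventually_and (IHn _ Hr) (IHs _ _ Hs)) => t [E1 E2] /=.
  by rewrite /= in E1; rewrite E1 /= mul1n.
- move=> f IHf xs v H; inversion H as [| | | | | | |? ? ? Hz Hlt]; subst.
  have Hm : eventually (fun t => forall m, m < v -> 1 < beval t i f (m :: xs)).
    apply: eventually_all_lt => m /Hlt [k /IHf].
    by apply: eventually_impl => t ->.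
  have Hv : eventually (fun t => v < t) by exists v.+1.
  apply: eventually_impl (eventually_and (eventually_and Hm (IHf _ _ Hz)) Hv).
  by move=> t [[E1 E2] E3] /=; rewrite (bsearch_found E2 E1).
Qed.

End BoundedEvaluation.

Fixpoint pall_pos (ps : list prog) : prog :=
  if ps is p :: ps' then papp2 pmul (papp1 psign p) (pall_pos ps') else pconst 1.

Definition pprojs (c n : nat) : list prog := [seq PProj (k + c) | k <- iota 0 n].

Definition pbsearch_step (r k : prog) : prog :=
  papp2 pmul (papp1 psign r)
    (papp2 padd (papp2 pmul (papp2 peq r (pconst 1)) (papp1 PSucc (papp1 PSucc k)))
                (papp1 piszero (papp2 peq r (pconst 1)))).

(* [beval_prog e a] computes [beval t i e xs] from the arguments [t :: i :: xs]
   when [size xs = a]. *)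
Fixpoint beval_prog (e : prog) (a : nat) {struct e} : prog :=
  match e with
  | PZero => pconst 1
  | PSucc => papp1 PSucc (papp1 PSucc (PProj 2))
  | PProj j => papp1 PSucc (PProj j.+2)
  | POrc => papp1 PSucc (papp2 peq (PProj 2) (PProj 1))
  | PComp f gs => papp2 pmul (pall_pos (map (beval_prog^~ a) gs))
      (PComp (beval_prog f (size gs))
         (PProj 0 :: PProj 1 :: map (fun g => papp1 ppred (beval_prog g a)) gs))
  | PRec b s => if a is a'.+1 then
      PComp (PRec (beval_prog b a')
        (papp2 pmul (papp1 psign (PProj 1))
          (PComp (beval_prog s a'.+2)
             (PProj 2 :: PProj 3 :: PProj 0 :: papp1 ppred (PProj 1) :: pprojs 4 a'))))
        (PProj 2 :: PProj 0 :: PProj 1 :: pprojs 3 a')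
      else PZero
  | PMu f => papp1 ppred (PComp (PRec (pconst 1)
        (let r := PComp (beval_prog f a.+1) (PProj 2 :: PProj 3 :: PProj 0 :: pprojs 4 a) in
         let s := PProj 1 in
         papp2 padd (papp2 pmul (papp2 peq s (pconst 1)) (pbsearch_step r (PProj 0)))
                    (papp2 pmul (papp1 piszero (papp2 peq s (pconst 1))) s)))
      (PProj 0 :: PProj 0 :: PProj 1 :: pprojs 2 a))
  end.

Section BoundedEvaluationProgram.
Variable o : nat -> nat.

Lemma evals_pprojs pre xs : evals o (pprojs (size pre) (size xs)) (pre ++ xs) xs.
Proof.
suff H m n : evals o [seq PProj (k + size pre) | k <- iota m n] (pre ++ xs)
  [seq nth 0 (pre ++ xs) (k + size pre) | k <- iota m n].
  have := H 0 (size xs); congr evals; rewrite -[RHS](mkseq_nth 0); apply: eq_map => k.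
  by rewrite nth_cat ltnNge leq_addl /= addnK.
elim: n m => [|n IH] m /=; first exact: evs_nil.
exact: evs_cons (ev_proj _ _ _) (IH _).
Qed.

Lemma eval_pall_pos ps xs ws :
  evals o ps xs ws -> eval o (pall_pos ps) xs (all (fun w => 0 < w) ws).
Proof.
elim=> [xs'|g gs xs' v vs Hg Hgs IH] /=; first exact: (eval_pconst o 1).
rewrite -mulnb; exact: eval_papp2 (eval_papp1 Hg (eval_psign _ _)) IH (eval_pmul _ _ _).
Qed.

Lemma eval_pbsearch_step r k xs a b : eval o r xs a -> eval o k xs b ->
  eval o (pbsearch_step r k) xs (bsearch_step a b).
Proof.
move=> Hr Hk; have Heq := eval_papp2 Hr (eval_pconst o 1 _) (eval_peq _ _ _).
apply: eval_papp2 (eval_papp1 Hr (eval_psign _ _)) _ (eval_pmul _ _ _).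
apply: eval_papp2 _ (eval_papp1 Heq (eval_piszero _ _)) (eval_padd _ _ _).
apply: eval_papp2 Heq _ (eval_pmul _ _ _).
exact: eval_papp1 (eval_papp1 Hk (ev_succ _ _)) (ev_succ _ _).
Qed.

Section Correctness.
Variables t i : nat.

Definition beval_prog_spec (e : prog) : Prop :=
  forall xs, eval o (beval_prog e (size xs)) [:: t, i & xs] (beval t i e xs).

Lemma beval_prog_PComp f gs : beval_prog_spec f -> all_progs beval_prog_spec gs ->
  beval_prog_spec (PComp f gs).
Proof.
move=> IHf IHgs xs /=.
have Hws : evals o (map (beval_prog^~ (size xs)) gs) [:: t, i & xs]
             (map (fun g => beval t i g xs) gs).
  elim: gs IHgs {IHf} => [|g gs IH] /=; first by move=> _; exact: evs_nil.
  by case=> Hg Hgs; apply: evs_cons (Hg _) (IH Hgs).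
apply: eval_papp2 (eval_pall_pos Hws) _ (eval_pmul _ _ _).
apply: (@ev_comp o _ _ _ [:: t, i & map predn (map (fun g => beval t i g xs) gs)]);
  last by have := IHf (map predn (map (fun g => beval t i g xs) gs)); rewrite !size_map.
apply: evs_cons (ev_proj _ _ _) _; apply: evs_cons (ev_proj _ _ _) _.
elim: gs IHgs {IHf Hws} => [|g gs IH] /=; first by move=> _; exact: evs_nil.
by case=> Hg Hgs; apply: evs_cons (IH Hgs); exact: eval_papp1 (Hg _) (eval_ppred _ _).
Qed.

Lemma beval_prog_PRec b s : beval_prog_spec b -> beval_prog_spec s ->
  beval_prog_spec (PRec b s).
Proof.
move=> IHb IHs [|n xs] /=; first exact: ev_zero.
apply: ev_comp.
  do 3 apply: evs_cons (ev_proj _ _ _) _; exact: (evals_pprojs [:: t; i; n] xs).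
apply: eval_PRec_seq => [|k]; first exact: IHb.
rewrite [brec _ _ k.+1]/=; set w := brec _ _ k.
apply: eval_papp2 (eval_papp1 (ev_proj _ _ _) (eval_psign _ _)) _ (eval_pmul _ _ _).
apply: ev_comp (IHs [:: k, w.-1 & xs]).
do 3 apply: evs_cons (ev_proj _ _ _) _.
apply: evs_cons (eval_papp1 (ev_proj _ _ _) (eval_ppred _ _)) _.
exact: (evals_pprojs [:: k; w; t; i] xs).
Qed.

Lemma beval_prog_PMu f : beval_prog_spec f -> beval_prog_spec (PMu f).
Proof.
move=> IHf xs /=; apply: eval_papp1 (eval_ppred _ _).
apply: ev_comp.
  do 3 apply: evs_cons (ev_proj _ _ _) _; exact: (evals_pprojs [:: t; i] xs).
apply: (eval_PRec_seq (R := bsearch (fun n => beval t i f (n :: xs)))) => [|k].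
  exact: (eval_pconst o 1).
set s := bsearch _ k.
have Hr : eval o (PComp (beval_prog f (size xs).+1)
    [:: PProj 2, PProj 3, PProj 0 & pprojs 4 (size xs)])
    [:: k, s, t, i & xs] (beval t i f (k :: xs)).
  apply: ev_comp (IHf (k :: xs)).
  do 3 apply: evs_cons (ev_proj _ _ _) _; exact: (evals_pprojs [:: k; s; t; i] xs).
have Hs1 := eval_papp2 (ev_proj _ 1 [:: k, s, t, i & xs]) (eval_pconst o 1 _) (eval_peq _ _ _).
rewrite [bsearch _ k.+1]/= -/s.
apply: eval_papp2 _ _ (eval_padd _ _ _).
  exact: eval_papp2 Hs1 (eval_pbsearch_step Hr (ev_proj _ _ _)) (eval_pmul _ _ _).
exact: eval_papp2 (eval_papp1 Hs1 (eval_piszero _ _)) (ev_proj _ _ _) (eval_pmul _ _ _).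
Qed.

Lemma eval_beval_prog e : beval_prog_spec e.
Proof.
elim/prog_nested_ind: e => //=.
- move=> xs; exact: (eval_pconst o 1).
- move=> xs; exact: eval_papp1 (eval_papp1 (ev_proj _ _ _) (ev_succ _ _)) (ev_succ _ _).
- move=> j xs; exact: eval_papp1 (ev_proj _ _ _) (ev_succ _ _).
- move=> xs; apply: eval_papp1 (ev_succ _ _).
  exact: eval_papp2 (ev_proj _ _ _) (ev_proj _ _ _) (eval_peq _ _ _).
- exact: beval_prog_PComp.
- exact: beval_prog_PRec.
- exact: beval_prog_PMu.
Qed.

End Correctness.

End BoundedEvaluationProgram.

Section SearchRejection.
Variables (ePsi : prog) (k : nat) (o : nat -> nat).

(* [1] iff within bound [t], [ePsi] with oracle [chi i] outputs on [k] a value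
   other than [1]; [0] otherwise. *)
Definition halts_ne1 (t i : nat) : nat :=
  let w := beval t i ePsi [:: k] in (0 < w) * ((w == 2 : nat) == 0).

Fixpoint count_ne1 (t j b : nat) : nat :=
  if b is b'.+1 then count_ne1 t j b' + halts_ne1 t (j + b') else 0.

Definition pbeval_at : prog := PComp (beval_prog ePsi 1) [:: PProj 0; PProj 1; pconst k].
Definition phalts_ne1 : prog :=
  papp2 pmul (papp1 psign pbeval_at) (papp1 piszero (papp2 peq pbeval_at (pconst 2))).
Definition pcount_ne1 : prog := PRec PZero
  (papp2 padd (PProj 1) (PComp phalts_ne1 [:: PProj 2; papp2 padd (PProj 3) (PProj 0)])).

(* On input [j], first find the least bound [t] such that some [i] in
   [j, j + t] has [halts_ne1 t i], then output the least such [i]. *)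
Definition psearch_ne1 : prog :=
  papp2 padd (PProj 0)
    (PComp (PMu (papp1 piszero (PComp phalts_ne1 [:: PProj 1; papp2 padd (PProj 2) (PProj 0)])))
       [:: PMu (papp1 piszero (PComp pcount_ne1 [:: papp1 PSucc (PProj 0); PProj 0; PProj 1]));
           PProj 0]).

Lemma eval_pbeval_at t i : eval o pbeval_at [:: t; i] (beval t i ePsi [:: k]).
Proof.
apply: ev_comp (eval_beval_prog o t i ePsi [:: k]).
do 2 apply: evs_cons (ev_proj _ _ _) _.
exact: evs_cons (eval_pconst _ _ _) (evs_nil _ _).
Qed.

Lemma eval_phalts_ne1 t i : eval o phalts_ne1 [:: t; i] (halts_ne1 t i).
Proof.
apply: eval_papp2 (eval_papp1 (eval_pbeval_at _ _) (eval_psign _ _)) _ (eval_pmul _ _ _).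
apply: eval_papp1 _ (eval_piszero _ _).
exact: eval_papp2 (eval_pbeval_at _ _) (eval_pconst o 2 _) (eval_peq _ _ _).
Qed.

Lemma eval_phalts_ne1_offset n t j :
  eval o (PComp phalts_ne1 [:: PProj 1; papp2 padd (PProj 2) (PProj 0)]) [:: n; t; j]
    (halts_ne1 t (j + n)).
Proof.
apply: ev_comp (eval_phalts_ne1 _ _); apply: evs_cons (ev_proj _ _ _) _.
exact: evs_cons (eval_papp2 (ev_proj _ _ _) (ev_proj _ _ _) (eval_padd _ _ _)) (evs_nil _ _).
Qed.

Lemma eval_pcount_ne1 b t j : eval o pcount_ne1 [:: b; t; j] (count_ne1 t j b).
Proof.
apply: (eval_PRec_seq (R := count_ne1 t j)) => [|b']; first exact: ev_zero.
apply: eval_papp2 (ev_proj _ _ _) _ (eval_padd _ _ _).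
apply: ev_comp (eval_phalts_ne1 _ _); apply: evs_cons (ev_proj _ _ _) _.
exact: evs_cons (eval_papp2 (ev_proj _ _ _) (ev_proj _ _ _) (eval_padd _ _ _)) (evs_nil _ _).
Qed.

Lemma count_ne1_pos t j b :
  count_ne1 t j b != 0 -> exists2 n, n < b & halts_ne1 t (j + n) != 0.
Proof.
elim: b => [|b IH] //=; rewrite addn_eq0 negb_and => /orP [/IH [n Hn H]|]; last by exists b.
by exists n => //; exact: ltnW.
Qed.

Lemma count_ne1_ge t j b n : n < b -> halts_ne1 t (j + n) <= count_ne1 t j b.
Proof.
elim: b => [|b IH] //=; rewrite ltnS leq_eqVlt => /predU1P [->|/IH H].
  exact: leq_addl.
exact: leq_trans H (leq_addr _ _).
Qed.

Lemma eval_least_zero (f : prog) xs (F : nat -> bool) n :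
  (forall m, eval o f (m :: xs) (~~ F m)) -> F n -> (forall m, F m -> n <= m) ->
  eval o (PMu f) xs n.
Proof.
move=> Hf Hn Hmin; apply: ev_mu; first by have := Hf n; rewrite Hn.
move=> m Hm; exists 0; have := Hf m.
by case: (boolP (F m)) => // /Hmin; rewrite leqNgt Hm.
Qed.

Lemma psearch_ne1_total :
  (forall j, exists2 i, j <= i & exists2 v, v != 1 & eval (chi i) ePsi [:: k] v) ->
  forall j, exists c, eval o psearch_ne1 [:: j] c.
Proof.
move=> Hrej j.
have Ht : exists t, count_ne1 t j t.+1 != 0.
  have [i Hji [v Hv /beval_complete [t0 Ht0]]] := Hrej j.
  exists (maxn t0 (i - j)); rewrite -lt0n.
  apply: leq_trans (count_ne1_ge _ _ (leq_maxr t0 (i - j) : (i - j) < (maxn t0 (i - j)).+1)).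
  by rewrite /halts_ne1 subnKC // Ht0 ?leq_maxl //= eqSS (negbTE Hv).
have [t Ht_pos Ht_min] := ex_minnP Ht.
have Hn : exists n, halts_ne1 t (j + n) != 0.
  by have [n _ Hn] := count_ne1_pos Ht_pos; exists n.
have [n Hn_pos Hn_min] := ex_minnP Hn.
exists (j + n); apply: eval_papp2 (ev_proj _ _ _) _ (eval_padd _ _ _).
apply: ev_comp; last first.
  apply: (eval_least_zero (F := fun n => halts_ne1 t (j + n) != 0)) Hn_pos Hn_min => m.
  rewrite negbK; exact: eval_papp1 (eval_phalts_ne1_offset _ _ _) (eval_piszero _ _).
apply: evs_cons _ (evs_cons (ev_proj _ _ _) (evs_nil _ _)).
apply: (eval_least_zero (F := fun t => count_ne1 t j t.+1 != 0)) Ht_pos Ht_min => m.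
rewrite negbK; apply: eval_papp1 _ (eval_piszero _ _); apply: ev_comp (eval_pcount_ne1 _ _ _).
apply: evs_cons (eval_papp1 (ev_proj _ _ _) (ev_succ _ _)) _.
exact: evs_cons (ev_proj _ _ _) (evs_cons (ev_proj _ _ _) (evs_nil _ _)).
Qed.

Lemma psearch_ne1_spec j c : eval o psearch_ne1 [:: j] c ->
  j <= c /\ exists2 v, v != 1 & eval (chi c) ePsi [:: k] v.
Proof.
case/eval_papp2_inv => a [n [Ha Hsearch Hadd]].
rewrite (eval_det Ha (ev_proj _ _ _)) /= in Hadd.
rewrite (eval_det Hadd (eval_padd _ _ _)); split; first exact: leq_addr.
inversion Hsearch as [| | | |? ? ? vs ? Hgs Hmu| | |]; subst.
inversion Hgs as [|? ? ? t ? _ Hgs']; inversion Hgs' as [|? ? ? j' ? Hj' Hnil];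
  inversion Hnil; subst.
rewrite (eval_det Hj' (ev_proj _ _ _)) /= in Hmu.
case/eval_PMu_inv/eval_papp1_inv: Hmu => w [Hw Hz].
rewrite (eval_det Hw (eval_phalts_ne1_offset _ _ _)) in Hz.
have := eval_det Hz (eval_piszero _ _); rewrite /halts_ne1.
case Eb: (beval t (j + n) ePsi [:: k]) => [|[|[|v]]] //= _.
  by exists 0 => //; exact: beval_sound Eb.
by exists v.+2 => //; exact: beval_sound Eb.
Qed.

End SearchRejection.

Notation zero_oracle := (fun _ : nat => 0).

Lemma cylP s Y : cyl s Y <-> forall k, k < size s -> Y k = nth false s k.
Proof.
rewrite /cyl /prefix; split; first by move=> E k Hk; rewrite -E nth_mkseq.
move=> H; apply: (@eq_from_nth _ false) => [|k]; rewrite size_mkseq // => Hk.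
by rewrite nth_mkseq // H.
Qed.

Lemma sub_cyl_equiv (A B : cantor -> Prop) s :
  (forall X, A X <-> B X) -> sub_cyl s A -> sub_cyl s B.
Proof. by move=> E HA Y /HA /E. Qed.

Lemma maxlen_ge l s : s \in l -> size s <= maxlen l.
Proof.
elim: l => [|s' l IH] //=; rewrite inE => /predU1P [->|/IH H]; first exact: leq_maxl.
exact: leq_trans H (leq_maxr _ _).
Qed.

Section ReindexedTest.
Variables (U : nat -> cantor -> Prop) (H : prog).
Hypothesis HU : ML_test U.
Hypothesis H_total : forall j, exists c, eval zero_oracle H [:: j] c.
Hypothesis H_ge : forall j c, eval zero_oracle H [:: j] c -> j <= c.

Definition reindexed_test (j : nat) (X : cantor) : Prop :=
  exists c, eval zero_oracle H [:: j] c /\ U c X.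

Lemma reindexed_testE j c : eval zero_oracle H [:: j] c ->
  forall X, reindexed_test j X <-> U c X.
Proof.
move=> Hc X; split; last by exists c.
by case=> c' [Hc' HX]; rewrite (eval_det Hc Hc').
Qed.

Lemma reindexed_ML_test : ML_test reindexed_test.
Proof.
case: HU => Hopen [e He] Hmeas; split.
- move=> j X; have [c Hc] := H_total j; move/(reindexed_testE Hc) => /Hopen [n Hn].
  by exists n; apply: sub_cyl_equiv Hn => Y; rewrite (reindexed_testE Hc).
- exists (papp2 e (papp1 H (PProj 0)) (PProj 1)) => j s.
  have [c Hc] := H_total j.
  have -> : sub_cyl s (reindexed_test j) <-> sub_cyl s (U c).
    by split; apply: sub_cyl_equiv => Y; rewrite (reindexed_testE Hc).
  rewrite He; split=> [[v Hv]|[v /eval_papp2_inv [a [b [Ha Hb Hv]]]]]; exists v.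
    exact: eval_papp2 (eval_papp1 (ev_proj _ 0 [:: j; enc s]) Hc) (ev_proj _ 1 _) Hv.
  have [a' [Ha' Ha'']] := eval_papp1_inv Ha.
  rewrite (eval_det Ha' (ev_proj _ _ _)) /= in Ha''.
  by rewrite (eval_det Ha'' Hc) (eval_det Hb (ev_proj _ _ _)) in Hv.
- move=> j l Hl; have [c Hc] := H_total j.
  have := Hmeas c l (fun s Hs => sub_cyl_equiv (reindexed_testE Hc) (Hl s Hs)).
  by apply: leq_trans; rewrite leq_mul2l leq_exp2l // (H_ge Hc) orbT.
Qed.

End ReindexedTest.

Definition zeros_test (i : nat) (X : cantor) : Prop := forall k, k < i -> X k = false.

Definition ppow2 : prog := PRec (pconst 1) (papp2 padd (PProj 1) (PProj 1)).
Definition pmod : prog := PRec PZero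
  (papp2 pmul (papp1 PSucc (PProj 1))
     (papp1 piszero (papp2 peq (papp1 PSucc (PProj 1)) (PProj 2)))).
Definition pzeros_test : prog := PMu (papp2 pmod (PProj 2) (papp1 ppow2 (PProj 1))).

Lemma eval_ppow2 o i : eval o ppow2 [:: i] (2 ^ i).
Proof.
apply: (eval_PRec_seq (R := expn 2)) => [|k]; first exact: (eval_pconst o 1).
by rewrite expnS mul2n -addnn; exact: eval_papp2 (ev_proj _ _ _) (ev_proj _ _ _) (eval_padd _ _ _).
Qed.

Lemma modnS_arith k d : 0 < d ->
  k.+1 %% d = (k %% d).+1 * (((k %% d).+1 == d : nat) == 0).
Proof.
move=> Hd; rewrite -addn1 -modnDml addn1.
have : (k %% d).+1 <= d by rewrite ltn_pmod.
rewrite leq_eqVlt => /predU1P [->|E]; first by rewrite modnn eqxx muln0.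
by rewrite modn_small // (ltn_eqF E) muln1.
Qed.

Lemma eval_pmod o x m : 0 < m -> eval o pmod [:: x; m] (x %% m).
Proof.
move=> Hm; apply: (eval_PRec_seq (R := modn^~ m)) => [|k]; first by rewrite mod0n; exact: ev_zero.
rewrite modnS_arith //; have HS := eval_papp1 (ev_proj o 1 [:: k; k %% m; m]) (ev_succ _ _).
have Heq := eval_papp2 HS (ev_proj _ 2 _) (eval_peq _ _ _).
exact: eval_papp2 HS (eval_papp1 Heq (eval_piszero _ _)) (eval_pmul _ _ _).
Qed.

Lemma pzeros_testP o i x : (exists v, eval o pzeros_test [:: i; x] v) <-> 2 ^ i %| x.
Proof.
have Hpos : 0 < 2 ^ i by rewrite expn_gt0.
have Hf n : eval o (papp2 pmod (PProj 2) (papp1 ppow2 (PProj 1))) [:: n; i; x] (x %% 2 ^ i).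
  exact: eval_papp2 (ev_proj o 2 [:: n; i; x])
    (eval_papp1 (ev_proj o 1 [:: n; i; x]) (eval_ppow2 _ _)) (eval_pmod _ _ Hpos).
split=> [[v /eval_PMu_inv Hv]|/eqP E]; first by apply/eqP; exact: eval_det (Hf v) Hv.
by exists 0; apply: ev_mu => [|m //]; have := Hf 0; rewrite E.
Qed.

Lemma pow2_dvd_enc i s :
  2 ^ i %| enc s <-> forall k, k < i -> k < size s /\ nth false s k = false.
Proof.
elim: i s => [|i IH] s; first by rewrite dvd1n.
case: s => [|b s] /=.
  by rewrite dvdn1 expnS muln_eq1 /=; split=> // /(_ 0 isT) [].
rewrite expnS; case: b => /=.
  split=> [H|/(_ 0 isT) [] //].
  have : 2 %| (enc s).*2 + 1 := dvdn_trans (dvdn_mulr _ (dvdnn 2)) H.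
  by rewrite -mul2n dvdn_addr // dvdn_mulr.
rewrite addn0 -mul2n dvdn_pmul2l // IH; split=> H k Hk; last exact: H k.+1 Hk.
by case: k Hk => [|k] //= Hk; exact: H.
Qed.

Lemma sub_cyl_zeros_test i s : sub_cyl s (zeros_test i) <-> 2 ^ i %| enc s.
Proof.
rewrite pow2_dvd_enc; split=> [H k Hk|H Y /cylP HY k /H [Hks Hn]]; last by rewrite HY.
pose Y k := if k < size s then nth false s k else true.
have /H /(_ k Hk) : cyl s Y by apply/cylP => k' Hk'; rewrite /Y Hk'.
by rewrite /Y; case: ifP.
Qed.

Lemma zeros_test_measure i : measure_le_pow2 (zeros_test i) i.
Proof.
case=> [|s0 l'] Hl.
  rewrite /ext_count /=.
  have -> : [set t : 0.-tuple bool | false] = set0 by apply/setP => t; rewrite !inE.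
  by rewrite cards0.
set l := s0 :: l' in Hl *; set L := maxlen l.
have Hdvd s : s \in l -> forall k, k < i -> k < size s /\ nth false s k = false.
  by move=> /Hl /sub_cyl_zeros_test /pow2_dvd_enc.
have HiL : i <= L.
  case: i {Hl} Hdvd => [//|i] /(_ _ (mem_head _ _) i (ltnSn i)) [Hi _].
  exact: leq_trans Hi (maxlen_ge (mem_head _ _)).
set S := [set t : L.-tuple bool | has (fun s => take (size s) t == s) l].
have HS t : t \in S -> take i t = nseq i false.
  rewrite inE => /hasP [s Hs /eqP Et].
  have Hsz : size (take i t) = i by rewrite size_takel // size_tuple.
  apply: (@eq_from_nth _ false); rewrite Hsz ?size_nseq // => k Hki.
  rewrite nth_take // nth_nseq Hki.
  by have [Hks] := Hdvd s Hs k Hki; rewrite -Et nth_take.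
pose f (t : L.-tuple bool) := [tuple of drop i t].
have Hinj : {in S &, injective f}.
  move=> t1 t2 H1 H2 /(congr1 val) /= E; apply: val_inj => /=.
  by rewrite -(cat_take_drop i t1) -(cat_take_drop i t2) E (HS _ H1) (HS _ H2).
change (#|S| * 2 ^ i <= 2 ^ L); rewrite -(card_in_imset Hinj).
have := max_card (f @: S); rewrite card_tuple card_bool => Hc.
by apply: leq_trans (leq_mul Hc (leqnn _)) _; rewrite -expnD subnK.
Qed.

Lemma zeros_ML_test : ML_test zeros_test.
Proof.
split.
- move=> i X HX; exists i => Y /cylP HY k Hk.
  by rewrite HY /prefix ?size_mkseq // nth_mkseq //; exact: HX.
- exists pzeros_test => i s; rewrite sub_cyl_zeros_test; exact: iff_sym (pzeros_testP _ _ _).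
- exact: zeros_test_measure.
Qed.

Lemma MLR_of_universal_avoid U i X : universal_test U -> ~ U i X -> MLR X.
Proof.
move=> [_ Huniv] HX W HW; apply: NNPP => Hn; apply: HX.
by apply: (Huniv W HW X) => j; apply: NNPP => Hj; apply: Hn; exists j.
Qed.

Lemma ML_test_avoid_cyl U s : ML_test U -> exists X, cyl s X /\ ~ U (size s).+1 X.
Proof.
case=> _ _ Hmeas; apply: NNPP => Hn.
have Hsub : sub_cyl s (U (size s).+1).
  by move=> Y HY; apply: NNPP => HnY; apply: Hn; exists Y.
have HL : size s = maxlen [:: s] by rewrite /maxlen /= maxn0.
have Hpos : 0 < ext_count [:: s].
  apply/card_gt0P; exists (tcast HL (in_tuple s)).
  by rewrite inE /= val_tcast /= take_size eqxx.
have Hl s' : s' \in [:: s] -> sub_cyl s' (U (size s).+1) by rewrite inE => /eqP ->.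
have := Hmeas (size s).+1 [:: s] Hl; rewrite -HL => /(leq_trans (leq_pmull _ Hpos)).
by rewrite leq_exp2l // ltnn.
Qed.

Lemma RD_exists V X : ML_test V -> MLR X -> exists k, RD V X k.
Proof.
move=> HV /(_ V HV) HX.
pose P i : bool := if excluded_middle_informative (V i X) then false else true.
have HP i : P i <-> ~ V i X by rewrite /P; case: excluded_middle_informative.
have [|k /HP Hk Hmin] := ex_minnP (P := P); first by case: HX => i /HP; exists i.
exists k; split=> // m Hm; apply: NNPP => /HP /Hmin; by rewrite leqNgt Hm.
Qed.

Lemma RD_unique V X a b : RD V X a -> RD V X b -> a = b.
Proof.
move=> [Ha Ha'] [Hb Hb']; case: (ltngtP a b) => // H.
  by case: Ha; apply: Hb'.
by case: Hb; apply: Ha'.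
Qed.

Lemma MLR_avoid_reindexed U H Y : ML_test U -> MLR Y ->
  (forall j, exists c, eval zero_oracle H [:: j] c) ->
  (forall j c, eval zero_oracle H [:: j] c -> j <= c) ->
  exists j c, eval zero_oracle H [:: j] c /\ ~ U c Y.
Proof.
move=> HU HY Htot Hge; have [j Hj] := HY _ (reindexed_ML_test HU Htot Hge).
have [c Hc] := Htot j; exists j, c; split=> //.
by move=> HUc; apply: Hj; exists c.
Qed.

Lemma MLR_avoid_cofinal U Y : ML_test U -> MLR Y -> forall j, exists2 i, j <= i & ~ U i Y.
Proof.
move=> HU HY j.
have Hadd j' : eval zero_oracle (papp2 padd (PProj 0) (pconst j)) [:: j'] (j' + j).
  exact: eval_papp2 (ev_proj _ _ _) (eval_pconst _ _ _) (eval_padd _ _ _).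
have [|j' [c [Hc HUc]]] := MLR_avoid_reindexed HU HY (fun j' => ex_intro _ _ (Hadd j')).
  by move=> j' c /(eval_det (Hadd j')) <-; exact: leq_addr.
by exists c => //; rewrite -(eval_det (Hadd j') Hc) leq_addl.
Qed.

Lemma universal_levels_differ U V : universal_test U -> universal_test V ->
  exists X1 X2 k1 k2, [/\ MLR X1, MLR X2, RD V X1 k1, RD V X2 k2 & k1 != k2].
Proof.
move=> HU [HVtest HVuniv]; have [HVopen _ _] := HVtest.
have [X1 [_ /(MLR_of_universal_avoid HU) HX1]] := ML_test_avoid_cyl [::] HU.1.
have [k1 Hk1] := RD_exists HVtest HX1.
have [n Hn] : exists n, sub_cyl (Defs.prefix (fun _ => false) n) (V k1).
  by apply: HVopen; exact: HVuniv zeros_ML_test _ (fun i k _ => erefl) k1.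
have [X2 [/Hn HX2V /(MLR_of_universal_avoid HU) HX2]] :=
  ML_test_avoid_cyl (Defs.prefix (fun _ => false) n) HU.1.
have [k2 Hk2] := RD_exists HVtest HX2.
exists X1, X2, k1, k2; split=> //; apply/eqP => E.
by case: Hk2; rewrite -E.
Qed.

Definition bits (X : cantor) : nat -> nat := fun k => nat_of_bool (X k).

Definition some_layer (U : nat -> cantor -> Prop) (Y : cantor) : nat :=
  epsilon (inhabits 0) (fun i => ~ U i Y).

(* Answers [i0] at [Y0]: every admissible answer at a point is produced by some
   realizer of [LAY U]. *)
Definition layer_realizer (U : nat -> cantor -> Prop) (Y0 : cantor) (i0 : nat) : Defs.pmap :=
  fun p q => exists Y, delta_MLR p Y /\
    q = chi (if excluded_middle_informative (Y = Y0) then i0 else some_layer U Y).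

Lemma delta_MLR_functional p Y Y' : delta_MLR p Y -> delta_MLR p Y' -> Y = Y'.
Proof.
move=> [H _] [H' _]; apply: functional_extensionality => k.
by have := H k; rewrite H'; case: (Y k); case: (Y' k).
Qed.

Lemma TF_functional e : functional (TF e).
Proof.
by move=> p q1 q2 H1 H2; apply: functional_extensionality => n; exact: eval_det (H1 n) (H2 n).
Qed.

Lemma layer_realizer_functional U Y0 i0 : functional (layer_realizer U Y0 i0).
Proof. by move=> p q1 q2 [Y [HY ->]] [Y' [HY' ->]]; rewrite (delta_MLR_functional HY HY'). Qed.

Lemma layer_realizer_realizes U Y0 i0 : ~ U i0 Y0 ->
  realizes delta_MLR delta_nat (LAY U) (layer_realizer U Y0 i0).
Proof.
move=> Hi0 p Y HY [n Hn].
have Hi : LAY U Y (if excluded_middle_informative (Y = Y0) then i0 else some_layer U Y).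
  case: (excluded_middle_informative (Y = Y0)) => [E|NE] /=; first by rewrite /LAY E.
  by apply: (epsilon_spec (inhabits 0) (fun i => ~ U i Y)); exists n.
by eexists; split; [exists Y | eexists; split; [move=> k | exact: Hi]].
Qed.

Section StrongReduction.
Variables (U V : nat -> cantor -> Prop) (ePhi ePsi : prog).
Hypotheses (HU : ML_test U) (HV : ML_test V).
Hypothesis Hred : forall G : Defs.pmap, functional G ->
  realizes delta_MLR delta_nat (LAY U) G ->
  realizes delta_MLR delta_nat (RD V) (pcomp3 (TF ePsi) G (TF ePhi)).

Lemma reduction_forward X : MLR X -> exists q Y, TF ePhi (bits X) q /\ delta_MLR q Y.
Proof.
move=> HX; have [k Hk] := RD_exists HV HX; have [i0 Hi0] := HX U HU.
have := Hred (@layer_realizer_functional U X i0) (layer_realizer_realizes Hi0).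
case/(_ (bits X) X (conj (fun k => erefl) HX) (ex_intro _ k Hk)).
by move=> r [[q [q' [HPhi [[Y [HY _]] _]]]] _]; exists q, Y.
Qed.

Lemma reduction_backward X q Y i k : MLR X -> TF ePhi (bits X) q -> delta_MLR q Y ->
  ~ U i Y -> RD V X k -> forall m, eval (chi i) ePsi [:: m] (m == k).
Proof.
move=> HX HPhi HY Hi Hk m.
have := Hred (@layer_realizer_functional U Y i) (layer_realizer_realizes Hi).
case/(_ (bits X) X (conj (fun k => erefl) HX) (ex_intro _ k Hk)).
move=> r [[q' [q'' [HPhi' [[Y' [HY' ->]] HPsi]]]] [b [Hb Hbk]]].
rewrite -(TF_functional HPhi HPhi') in HY'.
rewrite -(delta_MLR_functional HY HY') in HPsi.
move: HPsi; case: (excluded_middle_informative (Y = Y)) => [EY|NE] /(_ m); last by case: NE.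
by rewrite Hb (RD_unique Hbk Hk).
Qed.

End StrongReduction.

Theorem proposition5p5 (U V : nat -> cantor -> Prop) :
  universal_test U -> universal_test V ->
  ~ sW_le delta_MLR delta_nat (RD V) delta_MLR delta_nat (LAY U).
Proof.
move=> HU HV [ePhi [ePsi Hred]].
have [X1 [X2 [k1 [k2 [HX1 HX2 Hk1 Hk2 Hk12]]]]] := universal_levels_differ HU HV.
have [q1 [Y1 [HPhi1 HY1]]] := reduction_forward HU.1 HV.1 Hred HX1.
have [q2 [Y2 [HPhi2 HY2]]] := reduction_forward HU.1 HV.1 Hred HX2.
have Hrej j : exists2 i, j <= i & exists2 v, v != 1 & eval (chi i) ePsi [:: k1] v.
  have [i Hji HUi] := MLR_avoid_cofinal HU.1 HY2.2 j.
  exists i => //; exists 0 => //.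
  by have := reduction_backward Hred HX2 HPhi2 HY2 HUi Hk2 k1; rewrite (negbTE Hk12).
have [j [c [Hc HUc]]] := MLR_avoid_reindexed HU.1 HY1.2
  (psearch_ne1_total zero_oracle Hrej) (fun j c Hc => (psearch_ne1_spec Hc).1).
have [_ [v Hv1 Hv]] := psearch_ne1_spec Hc.
have := reduction_backward Hred HX1 HPhi1 HY1 HUc Hk1 k1.
by rewrite eqxx => /(eval_det Hv) Ev; rewrite Ev in Hv1.
Qed.
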